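(* Let $\mathcal{A}$ be a finite alphabet and $\mathbf{p}$ an irreducible pair on $\mathcal{A}$. If $\mathbf{q}=(q_0,q_1)$ is a pair (on some alphabet) such that the permutation $q_1\circ q_0^{-1}$ lies in the non-labeled extended Rauzy class of $\mathbf{p}$, then $\mathrm{ARF}(\mathbf{q})=\mathrm{ARF}(\mathbf{p})$.
   Context: Let $n=\#\mathcal{A}$. A pair is $\mathbf{p}=(p_0,p_1)$ with $p_0,p_1:\mathcal{A}\to\{1,\dots,n\}$ bijections. Irreducible: $p_0^{-1}\{1,\dots,k\}\ne p_1^{-1}\{1,\dots,k\}$ for $1\le k<n$. Rauzy move of type $\varepsilon$: $\varepsilon\mathbf{p}=(p'_0,p'_1)$, $p'_\varepsilon=p_\varepsilon$, and for $z=p_\varepsilon^{-1}(n)$, $p'_{1-\varepsilon}(b)=p_{1-\varepsilon}(b)$ if $p_{1-\varepsilon}(b)\le p_{1-\varepsilon}(z)$, $=p_{1-\varepsilon}(b)+1$ if $p_{1-\varepsilon}(z)<p_{1-\varepsilon}(b)<n$, $=p_{1-\varepsilon}(z)+1$ if $p_{1-\varepsilon}(b)=n$. Left Rauzy move of type $\varepsilon$: $\tilde\varepsilon\mathbf{p}=(p'_0,p'_1)$, $p'_\varepsilon=p_\varepsilon$, and for $a=p_\varepsilon^{-1}(1)$, $p'_{1-\varepsilon}(b)=p_{1-\varepsilon}(a)-1$ if $p_{1-\varepsilon}(b)=1$, $=p_{1-\varepsilon}(b)-1$ if $1<p_{1-\varepsilon}(b)<p_{1-\varepsilon}(a)$,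 unchanged otherwise. The labeled extended Rauzy class of $\mathbf{p}$ is the set of pairs reachable from $\mathbf{p}$ by Rauzy and left Rauzy moves of both types; the non-labeled extended Rauzy class is its image under $(p_0,p_1)\mapsto p_1\circ p_0^{-1}\in\mathfrak{S}_n$. Quadratic form: $\mathcal{Q}_{\mathbf{p}}(v)=\sum_{a}v_a^2+\sum_{\{a,b\}}L_{\mathbf{p}}(a,b)v_av_b \pmod 2$ for $v\in\mathbb{Z}_2^{\mathcal{A}}$, the second sum over unordered pairs of distinct letters, with $L_{\mathbf{p}}(a,b)=1$ if $(p_0(a)-p_0(b))(p_1(a)-p_1(b))<0$ and $0$ otherwise. $\mathrm{ARF}(\mathbf{p})=\#\{v\in\mathbb{Z}_2^{\mathcal{A}}:\mathcal{Q}_{\mathbf{p}}(v)=1\}$. *)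

From mathcomp Require Import all_boot all_order.
Set Implicit Arguments. Unset Strict Implicit. Unset Printing Implicit Defensive.

(* A pair on the alphabet A: two functions A -> nat, the positions 1..n. *)
Definition pairT (A : finType) := ((A -> nat) * (A -> nat))%type.

Definition is_bij_pos (A : finType) (f : A -> nat) : Prop :=
  injective f /\ forall a, 1 <= f a <= #|A|.

Definition is_pair (A : finType) (p : pairT A) : Prop :=
  is_bij_pos p.1 /\ is_bij_pos p.2.

Definition irreducible (A : finType) (p : pairT A) : Prop :=
  forall k, 1 <= k < #|A| ->
    [set a | p.1 a <= k] != [set a | p.2 a <= k].

Definition comp_of (A : finType) (p : pairT A) (eps : bool) : A -> nat :=
  if eps then p.2 else p.1.

Definition mk_pair (A : finType) (eps : bool) (pe po : A -> nat) : pairT A :=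
  if eps then (po, pe) else (pe, po).

(* Rauzy move of type eps (eps = false is type 0, eps = true is type 1) *)
Definition rauzy (A : finType) (eps : bool) (p : pairT A) : pairT A :=
  let n := #|A| in
  let pe := comp_of p eps in
  let po := comp_of p (~~ eps) in
  match [pick z | pe z == n] with
  | None => p
  | Some z =>
    mk_pair eps pe (fun b =>
      if po b <= po z then po b
      else if po b < n then (po b).+1
      else (po z).+1)
  end.

Definition left_rauzy (A : finType) (eps : bool) (p : pairT A) : pairT A :=
  let pe := comp_of p eps in
  let po := comp_of p (~~ eps) in
  match [pick a | pe a == 1] with
  | None => p
  | Some a =>
    mk_pair eps pe (fun b =>
      if (po b == 1) && (1 < po a) then (po a).-1
      else if (1 < po b) && (po b < po a) then (po b).-1
      else po b)
  end.

Inductive ext_reach (A : finType) (p : pairT A) : pairT A -> Prop :=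
  | er_refl : ext_reach p p
  | er_rauzy eps q : ext_reach p q -> ext_reach p (rauzy eps q)
  | er_left eps q : ext_reach p q -> ext_reach p (left_rauzy eps q).

Definition perm_of (A : finType) (p : pairT A) (k : nat) : nat :=
  match [pick a | p.1 a == k] with
  | Some a => p.2 a
  | None => 0
  end.

Definition in_nonlabeled_class (A B : finType) (p : pairT A) (q : pairT B) : Prop :=
  exists p', ext_reach p p' /\ #|B| = #|A| /\
    forall k, 1 <= k <= #|A| -> perm_of q k = perm_of p' k.

Definition Lp (A : finType) (p : pairT A) (a b : A) : bool :=
  ((p.1 a < p.1 b) && (p.2 b < p.2 a)) || ((p.1 b < p.1 a) && (p.2 a < p.2 b)).

(* Q_p(v) mod 2, v in Z_2^A represented as a boolean vector; unordered pairs
   {a,b} are enumerated once via enum_rank a < enum_rank b *)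
Definition Qp (A : finType) (p : pairT A) (v : {ffun A -> bool}) : nat :=
  ((\sum_a (v a : nat) * (v a : nat)) +
   \sum_a \sum_(b | enum_rank a < enum_rank b)
        (Lp p a b : nat) * (v a : nat) * (v b : nat)) %% 2.

Definition ARF (A : finType) (p : pairT A) : nat :=
  #|[set v : {ffun A -> bool} | Qp p v == 1]|.

From mathcomp Require Import all_boot all_order.
From mathcomp Require Import zify.
Set Implicit Arguments. Unset Strict Implicit. Unset Printing Implicit Defensive.

(* Over Z/2 the form Q_p depends only on the crossings of p. A Rauzy move of
   type 0, right or left, only moves one letter w of the bottom row next to the
   winner z; w and z cross before and after the move, and the new crossings of w
   are the sum of the old crossings of w and of z. Hence Q_p' = Q_p o T for the
   transvection T : v_z += v_w, a bijection of (Z/2)^A, so ARF is unchanged.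
   Moves of type 1 are moves of type 0 conjugated by the exchange of the two rows,
   which preserves crossings, and forgetting labels only permutes coordinates. *)

Notation "\xor_ ( i | P ) F" := (\big[addb/false]_(i | P) F)
  (at level 41, F at level 41, i at level 50).
Notation "\xor_ i F" := (\big[addb/false]_i F)
  (at level 41, F at level 41, i at level 0).

Section QuadraticForm.
Variable A : finType.
Implicit Types (M : rel A) (v : {ffun A -> bool}).

(* M plays the role of an orientation of the symmetric relation L_p: the double
   sum over ordered pairs counts each crossing unordered pair once. *)
Definition qform M v : bool :=
  (\xor_a v a) (+) \xor_a \xor_b (M a b && v a && v b).

Definition qform_ones M : nat := #|[set v | qform M v]|.

Lemma eq_qform M M' v : M =2 M' -> qform M v = qform M' v.
Proof.
by move=> eqM; congr addb; apply: eq_bigr => a _; apply: eq_bigr => b _; rewrite eqM.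
Qed.

Lemma qform_transpose M v : qform (fun a b => M b a) v = qform M v.
Proof.
rewrite /qform exchange_big /=; congr addb.
by apply: eq_bigr => a _; apply: eq_bigr => b _; rewrite -!andbA [v b && _]andbC.
Qed.

Lemma qform_upper M v : irreflexive M ->
  \xor_a \xor_(b | enum_rank a < enum_rank b) ((M a b (+) M b a) && v a && v b)
  = \xor_a \xor_b (M a b && v a && v b).
Proof.
move=> Mirr; pose t a b := M a b && v a && v b.
pose up (a b : A) x := if enum_rank a < enum_rank b then x else false.
have split_diag a b : t a b = up a b (t a b) (+) up b a (t a b).
  rewrite /up; case: (eqVneq a b) => [->|nab]; first by rewrite /t Mirr ltnn.
  have : enum_rank a != enum_rank b by apply: contra nab => /eqP/enum_rank_inj ->.
  case: (ltngtP (enum_rank a) (enum_rank b)) => [||/val_inj->];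
    by rewrite ?addbF ?addFb ?eqxx.
have -> : \xor_a \xor_b (M a b && v a && v b) =
          \xor_a \xor_b up a b (t a b) (+) \xor_a \xor_b up a b (t b a).
  rewrite [X in _ = _ (+) X]exchange_big -big_split /=.
  by apply: eq_bigr => a _; rewrite -big_split; apply: eq_bigr => b _; apply: split_diag.
rewrite -big_split /=; apply: eq_bigr => a _.
rewrite big_mkcond -big_split /=; apply: eq_bigr => b _.
rewrite /up /t; case: ifP => // _.
by case: (M a b); case: (M b a); case: (v a); case: (v b).
Qed.

Definition transvection (z w : A) v : {ffun A -> bool} :=
  [ffun x => if x == z then v z (+) v w else v x].

Lemma transvectionK (z w : A) : z != w -> involutive (transvection z w).
Proof.
move=> nzw v; apply/ffunP => x; rewrite !ffunE.
case: (eqVneq x z) => [->|//]; by rewrite eqxx eq_sym (negbTE nzw) -addbA addbb addbF.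
Qed.

Lemma xor_split2 (z w : A) (F : A -> bool) : z != w ->
  \xor_a F a = F w (+) F z (+) \xor_(a | (a != w) && (a != z)) F a.
Proof.
move=> nzw; rewrite (bigD1 w) //= (bigD1 z) /=; last by rewrite nzw.
by rewrite addbA.
Qed.

Lemma qform_transvection M M' (z w : A) v :
  z != w -> irreflexive M -> irreflexive M' ->
  (forall a b, a != w -> b != w -> M' a b = M a b) ->
  (forall b, b != w -> M' w b (+) M' b w = M w b (+) M b w (+) (M z b (+) M b z)) ->
  M w z (+) M z w ->
  qform M' v = qform M (transvection z w v).
Proof.
move=> nzw Mirr M'irr M'_off M'_row cross_wz.
have nwz : w != z by rewrite eq_sym.
have M'_wz : M' w z (+) M' z w by rewrite M'_row // !Mirr !addbF.
set u := transvection z w v.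
have uz : u z = v z (+) v w by rewrite /u ffunE eqxx.
have uo x : x != z -> u x = v x by move=> xz; rewrite /u ffunE (negbTE xz).
pose g a b := (M' a b && v a && v b) (+) (M a b && u a && u b).
have g_off a b : a != w -> a != z -> b != w -> b != z -> g a b = false.
  by move=> aw az bw bz; rewrite /g M'_off // !uo // addbb.
have g_row a : a != w -> a != z -> \xor_b g a b = g a w (+) g a z.
  move=> aw az; rewrite (xor_split2 _ nzw) big1 ?addbF // => b /andP[bw bz].
  exact: g_off.
have diff_double : (\xor_a \xor_b (M' a b && v a && v b)) (+)
                   (\xor_a \xor_b (M a b && u a && u b)) = v w.
  rewrite -big_split /= (eq_bigr (fun a => \xor_b g a b)); last first.
    by move=> a _; rewrite -big_split.
  rewrite (xor_split2 _ nzw) [X in _ (+) X](eq_bigr (fun a => g a w (+) g a z)); last first.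
    by move=> a /andP[]; exact: g_row.
  rewrite (xor_split2 (g w) nzw) (xor_split2 (g z) nzw).
  have -> : \xor_(a | (a != w) && (a != z)) (g a w (+) g a z) =
            \xor_(a | (a != w) && (a != z)) g w a (+) \xor_(a | (a != w) && (a != z)) g z a.
    rewrite -big_split; apply: eq_bigr => b /andP[bw bz]; have := M'_row b bw.
    rewrite /g uz !uo // (M'_off b z) // (M'_off z b) //.
    by case: (M' w b); case: (M' b w); case: (M w b); case: (M b w);
      case: (M z b); case: (M b z); case: (v w); case: (v z); case: (v b).
  rewrite /g uz !uo // [M' z z]M'_off // !Mirr !M'irr.
  move: M'_wz cross_wz; move: (\xor_(b | _) _) (\xor_(b | _) _) => x y.
  by case: (M' w z); case: (M' z w); case: (M w z); case: (M z w);
    case: (v w); case: (v z); case: x; case: y.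
rewrite /qform (xor_split2 _ nzw) [in RHS](xor_split2 _ nzw) uz uo //.
have -> : \xor_(a | (a != w) && (a != z)) u a = \xor_(a | (a != w) && (a != z)) v a.
  by apply: eq_bigr => a /andP[_ az]; rewrite uo.
move: diff_double; move: (\xor_a \xor_b (M' a b && v a && v b)).
move: (\xor_a \xor_b (M a b && u a && u b)) (\xor_(a | (a != w) && (a != z)) v a) => y r x.
by case: x; case: y; case: (v w); case: (v z); case: r.
Qed.

End QuadraticForm.

Lemma qform_relabel (A B : finType) (M : rel A) (s : B -> A) (v : {ffun A -> bool}) :
  bijective s -> qform M v = qform (fun a b => M (s a) (s b)) [ffun b => v (s b)].
Proof.
move=> s_bij; have s_on := onW_bij [pred: A | true] s_bij.
rewrite /qform (reindex s s_on) /=.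
congr addb; first by apply: eq_bigr => b _; rewrite ffunE.
rewrite (reindex s s_on) /=; apply: eq_bigr => b _.
by rewrite (reindex s s_on) /=; apply: eq_bigr => c _; rewrite !ffunE.
Qed.

Lemma qform_ones_bij (A B : finType) (M : rel A) (M' : rel B)
    (f : {ffun B -> bool} -> {ffun A -> bool}) :
  bijective f -> (forall v, qform M' v = qform M (f v)) -> qform_ones M' = qform_ones M.
Proof.
move=> [g fK gK] qfE; rewrite /qform_ones -(card_imset _ (can_inj fK)).
apply: eq_card => u; rewrite inE; apply/imsetP/idP => [[v]|Mu].
  by rewrite inE qfE => Mv ->.
by exists (g u); rewrite ?inE ?qfE gK.
Qed.

Lemma odd_sum (I : finType) (P : pred I) (F : I -> nat) :
  odd (\sum_(i | P i) F i) = \xor_(i | P i) odd (F i).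
Proof. exact: (big_morph odd oddD). Qed.

Definition crossing (A : finType) (p : pairT A) : rel A :=
  fun a b => (p.1 a < p.1 b) && (p.2 b < p.2 a).

Section Crossings.
Variable A : finType.
Implicit Type p : pairT A.

Lemma Lp_crossing p a b : Lp p a b = crossing p a b (+) crossing p b a.
Proof.
by rewrite /Lp /crossing; case: (ltngtP (p.1 a) (p.1 b)); case: (ltngtP (p.2 a) (p.2 b)).
Qed.

Lemma crossing_irr p : irreflexive (crossing p).
Proof. by move=> a; rewrite /crossing ltnn. Qed.

Lemma Qp_qform p v : (Qp p v == 1) = qform (crossing p) v.
Proof.
rewrite /Qp modn2 oddD !odd_sum.
have -> : forall b : bool, (b == 1 :> nat) = b by case.
rewrite /qform -qform_upper; last exact: crossing_irr.
congr addb; first by apply: eq_bigr => a _; rewrite oddM andbb oddb.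
apply: eq_bigr => a _; rewrite odd_sum; apply: eq_bigr => b _.
by rewrite !oddM !oddb Lp_crossing.
Qed.

Lemma ARF_qform_ones p : ARF p = qform_ones (crossing p).
Proof. by apply: eq_card => v; rewrite !inE Qp_qform. Qed.

End Crossings.

Lemma ARF_relabel (A B : finType) (p : pairT A) (q : pairT B) (s : B -> A) :
  bijective s -> q.1 =1 p.1 \o s -> q.2 =1 p.2 \o s -> ARF q = ARF p.
Proof.
move=> s_bij q1E q2E; have [s' sK s'K] := s_bij.
rewrite !ARF_qform_ones.
apply: (qform_ones_bij (f := fun v : {ffun B -> bool} => [ffun a => v (s' a)])).
  exists (fun u : {ffun A -> bool} => [ffun b => u (s b)] : {ffun B -> bool});
    by move=> u; apply/ffunP => x; rewrite !ffunE ?sK ?s'K.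
move=> v; rewrite [RHS](qform_relabel _ _ s_bij).
have -> : [ffun b => [ffun a => v (s' a)] (s b)] = v by apply/ffunP => b; rewrite !ffunE sK.
by apply: eq_qform => a b; rewrite /crossing /= !q1E !q2E.
Qed.

Lemma ARF_move_bottom (A : finType) (p : pairT A) (f : A -> nat) (z w : A) :
  z != w ->
  (forall a b, a != w -> b != w -> (f a < f b) = (p.2 a < p.2 b)) ->
  (forall b, b != w -> Lp (p.1, f) w b = Lp p w b (+) Lp p z b) ->
  Lp p w z -> ARF (p.1, f) = ARF p.
Proof.
move=> nzw f_off Lp_w cross_wz; rewrite !ARF_qform_ones.
apply: (qform_ones_bij (f := transvection z w)).
  by exists (transvection z w); apply: transvectionK.
move=> v; apply: qform_transvection => //.
- exact: crossing_irr.
- exact: crossing_irr.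
- by move=> a b aw bw; rewrite /crossing /= f_off.
- by move=> b bw; rewrite -!Lp_crossing Lp_w.
- by rewrite -Lp_crossing.
Qed.

Definition pair_swap (A : finType) (p : pairT A) : pairT A := (p.2, p.1).

Lemma ARF_swap (A : finType) (p : pairT A) : ARF (pair_swap p) = ARF p.
Proof.
rewrite !ARF_qform_ones; apply: eq_card => v; rewrite !inE -[in RHS]qform_transpose.
by apply: eq_qform => a b; rewrite /crossing /= andbC.
Qed.

Lemma is_pair_swap (A : finType) (p : pairT A) : is_pair p -> is_pair (pair_swap p).
Proof. by case. Qed.

Lemma is_bij_pos_surj (A : finType) (f : A -> nat) k :
  is_bij_pos f -> 1 <= k <= #|A| -> exists a, f a = k.
Proof.
move=> [f_inj f_range] /andP[k_gt0 k_le].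
have lt_pred a : (f a).-1 < #|A| by have := f_range a; lia.
pose g a := Ordinal (lt_pred a).
have g_inj : injective g.
  move=> a b /(congr1 val) /= E; apply: f_inj; have := f_range a; have := f_range b; lia.
have [h gK hK] : bijective g by apply: inj_card_bij; rewrite // card_ord.
have lt_k : k.-1 < #|A| by lia.
exists (h (Ordinal lt_k)).
have : (f (h (Ordinal lt_k))).-1 = k.-1 by exact: (congr1 val (hK (Ordinal lt_k))).
by have := f_range (h (Ordinal lt_k)); lia.
Qed.

Lemma Lp_xor (A : finType) (p : pairT A) a b : injective p.1 -> injective p.2 ->
  Lp p a b = (p.1 a < p.1 b) (+) (p.2 a < p.2 b).
Proof.
move=> inj1 inj2; have [->|ab] := eqVneq a b; first by rewrite /Lp !ltnn.
have ne1 : p.1 a != p.1 b by apply: contra ab => /eqP/inj1->.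
have ne2 : p.2 a != p.2 b by apply: contra ab => /eqP/inj2->.
rewrite /Lp; move: ne1 ne2.
by case: (ltngtP (p.1 a) (p.1 b)); case: (ltngtP (p.2 a) (p.2 b)).
Qed.

Ltac case_nat_test t := lazymatch t with
  | context [?m < ?n] => case: (ltnP m n) => ?
  | context [?m <= ?n] => case: (leqP m n) => ?
  | context [?m == ?n] => case: (eqVneq m n) => ?
  end.
Ltac case_nat_tests := repeat (match goal with
  | |- context [if ?b then _ else _] => case_nat_test b
  | |- ?g => case_nat_test g
  end; rewrite ?andTb ?andFb ?andbT ?andbF /=); try done.

(* The number of letters is a variable [n] so that [lia] sees a single atom where
   the various elaborations of [#|A|] would otherwise differ. *)
Section RauzyMoves.
Variables (A : finType) (n : nat) (p : pairT A).
Hypotheses (card_n : #|A| = n) (p_pair : is_pair p).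

Let range1 x : 1 <= p.1 x /\ p.1 x <= n.
Proof. by case: p_pair => -[_ /(_ x)]; rewrite card_n => /andP. Qed.
Let range2 x : 1 <= p.2 x /\ p.2 x <= n.
Proof. by case: p_pair => _ [_ /(_ x)]; rewrite card_n => /andP. Qed.
Let inj1 : injective p.1. Proof. by case: p_pair => -[]. Qed.
Let inj2 : injective p.2. Proof. by case: p_pair => _ []. Qed.
Let neq1 x y : x != y -> p.1 x <> p.1 y. Proof. by move=> /eqP xy /inj1. Qed.
Let neq2 x y : x != y -> p.2 x <> p.2 y. Proof. by move=> /eqP xy /inj2. Qed.

Section RightMove.
Variables z w : A.
Hypotheses (top_z : p.1 z = n) (bot_w : p.2 w = n).

Definition rauzy_shift (b : A) : nat :=
  if p.2 b <= p.2 z then p.2 b else if p.2 b < n then (p.2 b).+1 else (p.2 z).+1.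

Lemma rauzy_shift_bij_pos : is_bij_pos rauzy_shift.
Proof.
split=> [a b|a]; rewrite /rauzy_shift ?card_n; last first.
  have [? ?] := range2 a; have [? ?] := range2 z.
  by apply/andP; split; case_nat_tests; lia.
have [? ?] := range2 a; have [? ?] := range2 b; have [? ?] := range2 z.
by case: (eqVneq a b) => // /neq2; case_nat_tests; lia.
Qed.

Lemma rauzy_shift_mono a b : a != w -> b != w ->
  (rauzy_shift a < rauzy_shift b) = (p.2 a < p.2 b).
Proof.
move=> /neq2 aw /neq2 bw; rewrite bot_w in aw bw.
have [? ?] := range2 a; have [? ?] := range2 b; have [? ?] := range2 z.
by rewrite /rauzy_shift; case_nat_tests; lia.
Qed.

Lemma Lp_last_letters : z != w -> Lp p w z.
Proof.
move=> zw; have := neq1 zw; have := neq2 zw; rewrite top_z bot_w.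
have [? ?] := range1 w; have [? ?] := range2 z.
by rewrite /Lp; case_nat_tests; lia.
Qed.

Lemma rauzy_shift_moved b : z != w -> b != w ->
  (rauzy_shift w < rauzy_shift b) = (p.2 z < p.2 b).
Proof.
move=> /neq2 zw /neq2 bw; rewrite bot_w in zw bw.
have [? ?] := range2 b; have [? ?] := range2 z.
by rewrite /rauzy_shift bot_w; case_nat_tests; lia.
Qed.

Lemma Lp_rauzy_shift b : z != w -> b != w ->
  Lp (p.1, rauzy_shift) w b = Lp p w b (+) Lp p z b.
Proof.
move=> zw bw; have [shift_inj _] := rauzy_shift_bij_pos.
rewrite !Lp_xor //= rauzy_shift_moved // top_z bot_w.
have [_ ?] := range1 b; have [_ ?] := range2 b.
by case_nat_tests; lia.
Qed.

Lemma rauzy_shift_spec : is_pair (p.1, rauzy_shift) /\ ARF (p.1, rauzy_shift) = ARF p.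
Proof.
split; first by split; [case: p_pair | exact: rauzy_shift_bij_pos].
have [zw|zw] := eqVneq z w.
  apply: (ARF_relabel (s := id)) => [|//|b /=]; first by exists id.
  by rewrite /rauzy_shift zw bot_w; have [_ ->] := range2 b.
apply: (ARF_move_bottom zw) => [a b aw bw||]; first exact: rauzy_shift_mono.
  by move=> b; apply: Lp_rauzy_shift.
exact: Lp_last_letters.
Qed.

End RightMove.

Section LeftMove.
Variables z w : A.
Hypotheses (top_z : p.1 z = 1) (bot_w : p.2 w = 1).

Definition left_rauzy_shift (b : A) : nat :=
  if (p.2 b == 1) && (1 < p.2 z) then (p.2 z).-1
  else if (1 < p.2 b) && (p.2 b < p.2 z) then (p.2 b).-1 else p.2 b.

Lemma left_rauzy_shift_bij_pos : is_bij_pos left_rauzy_shift.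
Proof.
split=> [a b|a]; rewrite /left_rauzy_shift ?card_n; last first.
  have [? ?] := range2 a; have [? ?] := range2 z.
  by apply/andP; split; case_nat_tests; lia.
have [? ?] := range2 a; have [? ?] := range2 b; have [? ?] := range2 z.
by case: (eqVneq a b) => // /neq2; case_nat_tests; lia.
Qed.

Lemma left_rauzy_shift_mono a b : a != w -> b != w ->
  (left_rauzy_shift a < left_rauzy_shift b) = (p.2 a < p.2 b).
Proof.
move=> /neq2 aw /neq2 bw; rewrite bot_w in aw bw.
have [? ?] := range2 a; have [? ?] := range2 b; have [? ?] := range2 z.
by rewrite /left_rauzy_shift; case_nat_tests; lia.
Qed.

Lemma Lp_first_letters : z != w -> Lp p w z.
Proof.
move=> zw; have := neq1 zw; have := neq2 zw; rewrite top_z bot_w.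
have [? ?] := range1 w; have [? ?] := range2 z.
by rewrite /Lp; case_nat_tests; lia.
Qed.

Lemma left_rauzy_shift_moved b : z != w -> b != w ->
  (left_rauzy_shift w < left_rauzy_shift b) = (p.2 z <= p.2 b).
Proof.
move=> /neq2 zw /neq2 bw; rewrite bot_w in zw bw.
have [? ?] := range2 b; have [? ?] := range2 z.
by rewrite /left_rauzy_shift bot_w; case_nat_tests; lia.
Qed.

Lemma Lp_left_rauzy_shift b : z != w -> b != w ->
  Lp (p.1, left_rauzy_shift) w b = Lp p w b (+) Lp p z b.
Proof.
move=> zw bw; have [shift_inj _] := left_rauzy_shift_bij_pos.
rewrite !Lp_xor //= left_rauzy_shift_moved // top_z bot_w.
have := neq2 bw; rewrite bot_w; have [? _] := range2 b; have [? _] := range2 z.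
have [? _] := range1 b; have [? _] := range1 w.
have [->|/[dup] /neq1 ? /neq2] := eqVneq b z; rewrite ?top_z; case_nat_tests; lia.
Qed.

Lemma left_rauzy_shift_spec :
  is_pair (p.1, left_rauzy_shift) /\ ARF (p.1, left_rauzy_shift) = ARF p.
Proof.
split; first by split; [case: p_pair | exact: left_rauzy_shift_bij_pos].
have [zw|zw] := eqVneq z w.
  apply: (ARF_relabel (s := id)) => [|//|b /=]; first by exists id.
  have [? ?] := range2 b.
  by rewrite /left_rauzy_shift zw bot_w /=; case_nat_tests; lia.
apply: (ARF_move_bottom zw) => [a b aw bw||]; first exact: left_rauzy_shift_mono.
  by move=> b; apply: Lp_left_rauzy_shift.
exact: Lp_first_letters.
Qed.

End LeftMove.
End RauzyMoves.

Lemma rauzy_swap (A : finType) (p : pairT A) :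
  rauzy true p = pair_swap (rauzy false (pair_swap p)).
Proof. by rewrite /rauzy /pair_swap /=; case: [pick z | _] => [z|] //; case: p. Qed.

Lemma left_rauzy_swap (A : finType) (p : pairT A) :
  left_rauzy true p = pair_swap (left_rauzy false (pair_swap p)).
Proof. by rewrite /left_rauzy /pair_swap /=; case: [pick z | _] => [z|] //; case: p. Qed.

Lemma rauzy0_spec (A : finType) (p : pairT A) :
  is_pair p -> is_pair (rauzy false p) /\ ARF (rauzy false p) = ARF p.
Proof.
move=> p_pair; rewrite /rauzy /=; case: pickP => [z /eqP top_z|_]; last by [].
have [w bot_w] : exists w, p.2 w = #|A|.
  by case: p_pair => [[_ /(_ z)]] /is_bij_pos_surj; rewrite top_z; apply.
exact: (rauzy_shift_spec (erefl _) p_pair top_z bot_w).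
Qed.

Lemma left_rauzy0_spec (A : finType) (p : pairT A) :
  is_pair p -> is_pair (left_rauzy false p) /\ ARF (left_rauzy false p) = ARF p.
Proof.
move=> p_pair; rewrite /left_rauzy /=; case: pickP => [z /eqP top_z|_]; last by [].
have [w bot_w] : exists w, p.2 w = 1.
  by case: p_pair => [[_ /(_ z)]] /is_bij_pos_surj; rewrite top_z; apply.
exact: (left_rauzy_shift_spec (erefl _) p_pair top_z bot_w).
Qed.

Lemma rauzy_spec (A : finType) eps (p : pairT A) :
  is_pair p -> is_pair (rauzy eps p) /\ ARF (rauzy eps p) = ARF p.
Proof.
case: eps => p_pair; last exact: rauzy0_spec.
have [? ARF_move] := rauzy0_spec (is_pair_swap p_pair).
by rewrite rauzy_swap ARF_swap ARF_move ARF_swap; split=> //; apply: is_pair_swap.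
Qed.

Lemma left_rauzy_spec (A : finType) eps (p : pairT A) :
  is_pair p -> is_pair (left_rauzy eps p) /\ ARF (left_rauzy eps p) = ARF p.
Proof.
case: eps => p_pair; last exact: left_rauzy0_spec.
have [? ARF_move] := left_rauzy0_spec (is_pair_swap p_pair).
by rewrite left_rauzy_swap ARF_swap ARF_move ARF_swap; split=> //; apply: is_pair_swap.
Qed.

Lemma ext_reach_ARF (A : finType) (p q : pairT A) :
  ext_reach p q -> is_pair p -> is_pair q /\ ARF q = ARF p.
Proof.
move=> reach_q p_pair; elim: reach_q => [|eps r _ [r_pair <-]|eps r _ [r_pair <-]] //.
  exact: rauzy_spec.
exact: left_rauzy_spec.
Qed.

Lemma perm_ofE (A : finType) (p : pairT A) a : injective p.1 -> perm_of p (p.1 a) = p.2 a.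
Proof.
move=> inj1; rewrite /perm_of; case: pickP => [a' /eqP /inj1 -> //|].
by move/(_ a); rewrite eqxx.
Qed.

Lemma ARF_perm_of (A B : finType) (p : pairT A) (q : pairT B) :
  is_pair p -> is_pair q -> #|B| = #|A| ->
  (forall k, 1 <= k <= #|A| -> perm_of q k = perm_of p k) -> ARF q = ARF p.
Proof.
move=> [[inj1 range1] _] [[qinj1 qrange1] _] cardBA same_perm.
have [s top_s] : exists s : B -> A, forall b, p.1 (s b) = q.1 b.
  apply: (@fin_all_exists B (fun=> A) (fun b a => p.1 a = q.1 b)) => b.
  by apply: (is_bij_pos_surj (conj inj1 range1)); rewrite -cardBA qrange1.
have s_inj : injective s by move=> x y sxy; apply: qinj1; rewrite -!top_s sxy.
have s_bij : bijective s by apply: inj_card_bij; rewrite // cardBA.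
apply: (ARF_relabel s_bij) => b /=; first by rewrite top_s.
rewrite -(perm_ofE b qinj1) same_perm; last by rewrite -cardBA.
by rewrite -top_s perm_ofE.
Qed.

Theorem corollary2p20 (A : finType) (p : pairT A) (B : finType) (q : pairT B) :
  is_pair p -> irreducible p -> is_pair q -> in_nonlabeled_class p q ->
  ARF q = ARF p.
Proof.
move=> p_pair _ q_pair [p' [reach_p' [cardBA same_perm]]].
have [p'_pair <-] := ext_reach_ARF reach_p' p_pair.
exact: ARF_perm_of.
Qed.
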